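(* Suppose $l$ is $(M,m)$-(restricted smooth, restricted strongly concave) on $\Omega_{2k}$. Then for all subsets $\mathsf{S},\mathsf{T}\subseteq[n]$ of size at most $k$, $$2M\sum_{j\in\mathsf{T}}f_{\mathsf{S}}(j)\ \ge\ \|\nabla l(\boldsymbol\beta^{(\mathsf{S})})_{\mathsf{T}}\|_2^2\ \ge\ 2m\sum_{j\in\mathsf{T}}f_{\mathsf{S}}(j).$$
   Context: $\Omega_r=\{(\mathbf{x},\mathbf{y})\in\mathbb{R}^n\times\mathbb{R}^n:\|\mathbf{x}\|_0\le r,\|\mathbf{y}\|_0\le r,\|\mathbf{x}-\mathbf{y}\|_0\le r\}$. A differentiable $l:\mathbb{R}^n\to\mathbb{R}$ is $(M,m)$-(restricted smooth, restricted strongly concave) on $\Omega_r$ if for all $(\mathbf{x},\mathbf{y})\in\Omega_r$: $-\tfrac{m}{2}\|\mathbf{y}-\mathbf{x}\|_2^2\ge l(\mathbf{y})-l(\mathbf{x})-\langle\nabla l(\mathbf{x}),\mathbf{y}-\mathbf{x}\rangle\ge -\tfrac{M}{2}\|\mathbf{y}-\mathbf{x}\|_2^2$, with $m,M>0$. For $\mathsf{S}\subseteq[n]$, $\boldsymbol\beta^{(\mathsf{S})}$ is a maximizer of $l$ over vectors supported in $\mathsf{S}$, $f(\mathsf{S})=l(\boldsymbol\beta^{(\mathsf{S})})-l(\mathbf{0})$, and $f_{\mathsf{S}}(j)=f(\mathsf{S}\cup\{j\})-f(\mathsf{S})$. $\mathbf{e}_j$ is the $j$-th unit vector and $\|\nabla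 l(\boldsymbol\beta)_{\mathsf{T}}\|_2^2=\sum_{j\in\mathsf{T}}\langle\nabla l(\boldsymbol\beta),\mathbf{e}_j\rangle^2$. *)

From HB Require Import structures.
From mathcomp Require Import all_boot all_order all_algebra.
From mathcomp Require Import all_classical all_reals all_analysis.
Set Implicit Arguments. Unset Strict Implicit. Unset Printing Implicit Defensive.
Import Order.TTheory GRing.Theory Num.Theory.
Import numFieldNormedType.Exports.
Local Open Scope classical_set_scope.
Local Open Scope ring_scope.

Section Defs.
Variables (R : realType) (n : nat).
Implicit Types (x y : 'rV[R]_n) (S : {set 'I_n}) (l : 'rV[R]_n -> R^o).

Definition l0norm x : nat := #|[set i | x 0 i != 0]|.

Definition Omega (r : nat) (x y : 'rV[R]_n) : Prop :=
  [/\ (l0norm x <= r)%N, (l0norm y <= r)%N & (l0norm (x - y) <= r)%N].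

Definition sqnorm2 x : R := \sum_i (x 0 i) ^+ 2.
Definition inner x y : R := \sum_i x 0 i * y 0 i.

Definition evec (j : 'I_n) : 'rV[R]_n := delta_mx 0 j.

Definition grad l x : 'rV[R]_n := \row_j ('d l x (evec j) : R).

Definition RSSC (M m : R) (r : nat) l : Prop :=
  0 < m /\ 0 < M /\
  forall x y, Omega r x y ->
    - (m / 2) * sqnorm2 (y - x) >= l y - l x - inner (grad l x) (y - x) /\
    l y - l x - inner (grad l x) (y - x) >= - (M / 2) * sqnorm2 (y - x).

Definition supported S x : Prop := forall i, i \notin S -> x 0 i = 0.

Definition is_maximizer l S b : Prop :=
  supported S b /\ forall x, supported S x -> l x <= l b.

(* f(S) = l(beta^(S)) - l(0), written as the (attained) supremum *)
Definition fS l S : R :=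
  sup [set v : R | exists x, supported S x /\ v = l x - l 0].

Definition fmarg l S (j : 'I_n) : R := fS l (j |: S) - fS l S.

Definition gradTsq l b (T : {set 'I_n}) : R :=
  \sum_(j in T) (inner (grad l b) (evec j)) ^+ 2.

End Defs.

(* At a maximizer b of l over vectors supported in S, restricted smoothness along e_i
   (i in S) forces the i-th partial derivative g_i of l at b to vanish.  For j outside S,
   every x supported in S u {j} then satisfies, by restricted strong concavity,
   l x - l b <= g_j x_j - (m/2) x_j^2 <= g_j^2 / (2m), while restricted smoothness gives
   l (b + (g_j/M) e_j) - l b >= g_j^2 / (2M).  Hence g_j^2/(2M) <= f_S(j) <= g_j^2/(2m);
   summing over T gives the theorem.  All pairs compared lie in Omega_{2k} because their
   supports fit in S u {j}, of size at most k + 1 <= 2k whenever T is nonempty. *)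
From HB Require Import structures.
From mathcomp Require Import all_boot all_order all_algebra.
From mathcomp Require Import all_classical all_reals all_analysis.
From mathcomp Require Import ring lra.
Set Implicit Arguments. Unset Strict Implicit. Unset Printing Implicit Defensive.
Import Order.TTheory GRing.Theory Num.Theory.
Import numFieldNormedType.Exports.
Local Open Scope ring_scope.

Lemma quadratic_le_sqr_div (R : realFieldType) (a u t : R) :
  0 < a -> u * t - a / 2 * t ^+ 2 <= u ^+ 2 / (2 * a).
Proof.
move=> a_gt0.
have : 0 <= (a * t - u) ^+ 2 / (2 * a) by rewrite divr_ge0 ?sqr_ge0 ?mulr_ge0 ?ltW.
suff -> : (a * t - u) ^+ 2 / (2 * a) = u ^+ 2 / (2 * a) - (u * t - a / 2 * t ^+ 2).
  by rewrite subr_ge0.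
by field; rewrite gt_eqF.
Qed.

Lemma quadratic_at_argmax (R : realFieldType) (a u : R) :
  0 < a -> u * (u / a) - a / 2 * (u / a) ^+ 2 = u ^+ 2 / (2 * a).
Proof. by move=> a_gt0; field; rewrite gt_eqF. Qed.

Section Coordinates.
Variables (R : realType) (n : nat).
Implicit Types (x y : 'rV[R]_n) (U V : {set 'I_n}).

Lemma inner_single x y (j : 'I_n) :
  (forall i, i != j -> x 0 i * y 0 i = 0) -> inner x y = x 0 j * y 0 j.
Proof. by move=> xy0; rewrite /inner (bigD1 j) //= big1 ?addr0. Qed.

Lemma inner_evec x (j : 'I_n) : inner x (evec R j) = x 0 j.
Proof.
rewrite (inner_single (j := j)) => [|i ij]; rewrite /evec mxE /=.
  by rewrite eqxx mulr1.
by rewrite (negbTE ij) mulr0.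
Qed.

Lemma inner_scale_evec x (t : R) (j : 'I_n) : inner x (t *: evec R j) = x 0 j * t.
Proof.
rewrite (inner_single (j := j)) => [|i ij]; rewrite !mxE /=; first by rewrite eqxx mulr1.
by rewrite (negbTE ij) mulr0 mulr0.
Qed.

Lemma sqnorm2_scale_evec (t : R) (j : 'I_n) : sqnorm2 (t *: evec R j) = t ^+ 2.
Proof.
rewrite /sqnorm2 (bigD1 j) //= big1 => [|i ij]; rewrite !mxE /=.
  by rewrite eqxx mulr1 addr0.
by rewrite (negbTE ij) mulr0 expr0n.
Qed.

Lemma sqr_coord_le_sqnorm2 x (j : 'I_n) : x 0 j ^+ 2 <= sqnorm2 x.
Proof. by rewrite /sqnorm2 (bigD1 j) //= lerDl sumr_ge0 // => i _; rewrite sqr_ge0. Qed.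

Lemma supported_subset U V x : U \subset V -> supported U x -> supported V x.
Proof. by move=> /fintype.subsetP UV xU i iV; apply: xU; apply: contra iV; apply: UV. Qed.

Lemma supportedB U x y : supported U x -> supported U y -> supported U (x - y).
Proof. by move=> xU yU i iU; rewrite !mxE xU ?yU ?subr0. Qed.

Lemma supported_addZ_evec U x (t : R) (j : 'I_n) :
  supported U x -> supported (j |: U) (x + t *: evec R j).
Proof.
move=> xU i; rewrite !inE negb_or => /andP[ij iU].
by rewrite !mxE /= xU // (negbTE ij) mulr0 addr0.
Qed.

Lemma l0norm_supported U x : supported U x -> (l0norm x <= #|U|)%N.
Proof.
move=> xU; apply/subset_leq_card/fintype.subsetP => i; rewrite inE.
by apply: contraR => /xU ->; rewrite eqxx.
Qed.

Lemma Omega_supported (r : nat) U x y :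
  (#|U| <= r)%N -> supported U x -> supported U y -> Omega r x y.
Proof.
move=> Ur xU yU; split; apply: leq_trans Ur; apply: l0norm_supported => //.
exact: supportedB.
Qed.

Lemma card_setU1_le U (j : 'I_n) : (#|j |: U| <= #|U|.+1)%N.
Proof. by rewrite cardsU1 -add1n leq_add2r leq_b1. Qed.

End Coordinates.

Section SupportedSup.
Variables (R : realType) (n : nat) (l : 'rV[R]_n -> R^o) (U : {set 'I_n}) (c : R).
Hypothesis l_bounded : forall x, supported U x -> l x - l 0 <= c.

Lemma fS_le : fS l U <= c.
Proof.
apply: ge_sup; last by move=> _ [x [xU ->]]; exact: l_bounded.
by exists (l 0 - l 0), 0; split => // i _; rewrite mxE.
Qed.

Lemma fS_ge x : supported U x -> l x - l 0 <= fS l U.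
Proof.
move=> xU; apply: ub_le_sup; last by exists x.
by exists c => _ [y [yU ->]]; exact: l_bounded.
Qed.

End SupportedSup.

Lemma fS_maximizer (R : realType) (n : nat) (l : 'rV[R]_n -> R^o) S b :
  is_maximizer l S b -> fS l S = l b - l 0.
Proof.
move=> [bS b_max]; have l_bounded x : supported S x -> l x - l 0 <= l b - l 0.
  by move=> xS; rewrite lerD2r b_max.
by apply/eqP; rewrite eq_le fS_le //= (fS_ge l_bounded).
Qed.

Section MarginalGain.
Variables (R : realType) (n r : nat) (l : 'rV[R]_n -> R^o) (M m : R).
Hypothesis l_RSSC : RSSC M m r l.
Variables (S : {set 'I_n}) (b : 'rV[R]_n).
Hypotheses (S_lt_r : (#|S| < r)%N) (b_max : is_maximizer l S b).

Let m_gt0 : 0 < m. Proof. by case: l_RSSC. Qed.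
Let M_gt0 : 0 < M. Proof. by case: l_RSSC => _ []. Qed.
Let bS : supported S b. Proof. by case: b_max. Qed.

Let Omega_setU1 (j : 'I_n) x : supported (j |: S) x -> Omega r b x.
Proof.
apply: Omega_supported; first exact: leq_trans (card_setU1_le _ _) S_lt_r.
exact: supported_subset (finset.subsetUr _ _) bS.
Qed.

Lemma maximizer_gain_ge (j : 'I_n) :
  (grad l b 0 j) ^+ 2 / (2 * M) <= l (b + (grad l b 0 j / M) *: evec R j) - l b.
Proof.
set t := grad l b 0 j / M; rewrite -quadratic_at_argmax //.
have [_ smooth] := l_RSSC.2.2 _ _ (Omega_setU1 (supported_addZ_evec t (j := j) bS)).
move: smooth; rewrite addrAC subrr add0r inner_scale_evec sqnorm2_scale_evec -/t.
lra.
Qed.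

Lemma grad_maximizer_eq0 (i : 'I_n) : i \in S -> grad l b 0 i = 0.
Proof.
move=> iS; apply/eqP; rewrite -sqrf_eq0 eq_le sqr_ge0 andbT.
have iSS : i |: S = S by apply/finset.setUidPr; rewrite finset.sub1set.
have not_better : l (b + (grad l b 0 i / M) *: evec R i) - l b <= 0.
  by rewrite subr_le0; apply: b_max.2; rewrite -iSS; apply: supported_addZ_evec.
have := le_trans (maximizer_gain_ge i) not_better.
by rewrite pmulr_lle0 // invr_gt0 mulr_gt0.
Qed.

Lemma maximizer_gain_le (j : 'I_n) x : j \notin S -> supported (j |: S) x ->
  l x - l b <= (grad l b 0 j) ^+ 2 / (2 * m).
Proof.
move=> jS xjS; have [concave _] := l_RSSC.2.2 _ _ (Omega_setU1 xjS).
have xb_j : (x - b) 0 j = x 0 j by rewrite !mxE (bS jS) subr0.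
have inner_xb : inner (grad l b) (x - b) = grad l b 0 j * x 0 j.
  rewrite (inner_single (j := j)) ?xb_j // => i ij.
  have [iS | iS] := boolP (i \in S); first by rewrite grad_maximizer_eq0 ?mul0r.
  have bjS : supported (j |: S) b := supported_subset (finset.subsetUr _ _) bS.
  by rewrite (supportedB xjS bjS) ?mulr0 // !inE negb_or ij.
have := quadratic_le_sqr_div (grad l b 0 j) (x 0 j) m_gt0.
have : m / 2 * x 0 j ^+ 2 <= m / 2 * sqnorm2 (x - b).
  by apply: ler_wpM2l; rewrite ?divr_ge0 ?(ltW m_gt0) // -xb_j sqr_coord_le_sqnorm2.
move: concave; rewrite inner_xb; lra.
Qed.

Lemma fmarg_maximizer_bounds (j : 'I_n) :
  (grad l b 0 j) ^+ 2 / (2 * M) <= fmarg l S j <= (grad l b 0 j) ^+ 2 / (2 * m).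
Proof.
have [jS | jS] := boolP (j \in S).
  rewrite /fmarg (finset.setUidPr _) ?finset.sub1set // subrr grad_maximizer_eq0 //.
  by rewrite expr0n /= !mul0r lexx.
rewrite /fmarg (fS_maximizer b_max).
have l_bounded x : supported (j |: S) x ->
    l x - l 0 <= l b - l 0 + (grad l b 0 j) ^+ 2 / (2 * m).
  by move=> xjS; have := maximizer_gain_le jS xjS; lra.
apply/andP; split; last by rewrite lerBlDl fS_le.
rewrite lerBrDl; apply: le_trans _ (fS_ge l_bounded (supported_addZ_evec _ (j := j) bS)).
have := maximizer_gain_ge j; lra.
Qed.

End MarginalGain.

Theorem mainTheorem3 (R : realType) (n k : nat) (l : 'rV[R]_n -> R^o) (M m : R) :
  (forall x, differentiable l x) ->
  RSSC M m (2 * k) l ->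
  forall (S T : {set 'I_n}), (#|S| <= k)%N -> (#|T| <= k)%N ->
  forall b : 'rV[R]_n, is_maximizer l S b ->
    2 * M * (\sum_(j in T) fmarg l S j) >= gradTsq l b T /\
    gradTsq l b T >= 2 * m * (\sum_(j in T) fmarg l S j).
Proof.
move=> _ l_RSSC S T S_le_k T_le_k b b_max; have [m_gt0 [M_gt0 _]] := l_RSSC.
have S_lt_2k j : j \in T -> (#|S| < 2 * k)%N.
  move=> jT; have k_gt0 : (0 < k)%N.
    by apply: leq_trans T_le_k; apply/card_gt0P; exists j.
  by rewrite mul2n -addnn -addn1 leq_add.
rewrite /gradTsq !mulr_sumr; split; apply: ler_sum => j jT; rewrite inner_evec;
  have /andP[gain_ge gain_le] := fmarg_maximizer_bounds l_RSSC (S_lt_2k j jT) b_max j.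
- by rewrite -ler_pdivrMl ?mulr_gt0 // mulrC.
- by rewrite -ler_pdivlMl ?mulr_gt0 // mulrC.
Qed.
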